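(* Let $X$ be a real Banach space. Consider: (1) $X$ is UR. (2) $d(Q_{S_X}(x,\frac1n),Q_{S_X}(x',\frac1n))\to\|x-x'\|$ uniformly on $(x,x')\in S_X\times S_X$. (3) $d(Q_{S_X}(x,\frac1n),Q_{S_X}(-x,\frac1n))\to2$ uniformly on $x\in S_X$. Then $(1)\Rightarrow(2)\Rightarrow(3)$.
   Context: $B_X,S_X$ are the closed unit ball and unit sphere of $X$. For non-empty bounded $F$, $x\in X$, $\delta\ge0$: $r(F,x)=\sup_{y\in F}\|x-y\|$, $Q_F(x,\delta)=\{y\in F:\|x-y\|\ge r(F,x)-\delta\}$. For non-empty sets $A,B$, $d(A,B)=\inf\{\|a-b\|:a\in A,b\in B\}$. $X$ is UR if $\|x_n-y_n\|\to0$ whenever $(x_n),(y_n)\subseteq S_X$ with $\|\frac{x_n+y_n}{2}\|\to1$. *)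

From HB Require Import structures.
From mathcomp Require Import all_boot all_order all_algebra.
From mathcomp Require Import all_classical all_reals all_analysis.
Set Implicit Arguments. Unset Strict Implicit. Unset Printing Implicit Defensive.
Import Order.TTheory GRing.Theory Num.Theory.
Import numFieldNormedType.Exports.
Local Open Scope classical_set_scope.
Local Open Scope ring_scope.

Section Defs.
Variables (R : realType) (X : normedModType R).

Definition unit_sphere : set X := [set y | `|y| = 1].

Definition rad (F : set X) (x : X) : R := sup [set `|x - y| | y in F].

Definition Qset (F : set X) (x : X) (delta : R) : set X :=
  [set y | F y /\ rad F x - delta <= `|x - y|].

Definition setdist (A B : set X) : R :=
  inf [set `|ab.1 - ab.2| | ab in [set ab : X * X | A ab.1 /\ B ab.2]].

Definition UR : Prop :=
  forall xn yn : nat -> X,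
    (forall n, `|xn n| = 1) -> (forall n, `|yn n| = 1) ->
    (fun n => `|2^-1 *: (xn n + yn n)|) @ \oo --> (1 : R) ->
    (fun n => `|xn n - yn n|) @ \oo --> (0 : R).

Definition Prop2 : Prop :=
  forall eps : R, 0 < eps -> exists N : nat, forall n : nat, (N <= n)%N ->
    forall x x' : X, unit_sphere x -> unit_sphere x' ->
      `| setdist (Qset unit_sphere x (n%:R)^-1) (Qset unit_sphere x' (n%:R)^-1)
         - `|x - x'| | < eps.

Definition Prop3 : Prop :=
  forall eps : R, 0 < eps -> exists N : nat, forall n : nat, (N <= n)%N ->
    forall x : X, unit_sphere x ->
      `| setdist (Qset unit_sphere x (n%:R)^-1) (Qset unit_sphere (- x) (n%:R)^-1)
         - 2 | < eps.
End Defs.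

From Pilot Require Import Defs.
From HB Require Import structures.
From mathcomp Require Import all_boot all_order all_algebra.
From mathcomp Require Import all_classical all_reals all_analysis.
From mathcomp Require Import lra.
Set Implicit Arguments. Unset Strict Implicit. Unset Printing Implicit Defensive.
Import Order.TTheory GRing.Theory Num.Theory.
Import numFieldNormedType.Exports.
Local Open Scope classical_set_scope.
Local Open Scope ring_scope.

(* On the unit sphere r(S, x) = 2, so Q_S(x, 1/n) is the set of unit vectors at
   distance at least 2 - 1/n from x.  It contains -x, and uniform rotundity,
   applied to y and -x, makes all of its points uniformly close to -x.  Hence
   d(Q_S(x, 1/n), Q_S(x', 1/n)) is squeezed between ||x - x'|| - 2e, by the
   triangle inequality, and ||-x - -x'|| = ||x - x'||.  Finally (3) is (2) at
   x' = -x. *)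

Section NormedSpace.
Variables (R : realType) (X : normedModType R).
Implicit Types (x y a b : X) (A B : set X).
Local Notation S := (@unit_sphere R X).

Lemma unit_sphereN x : S x -> S (- x).
Proof. by rewrite /unit_sphere /= normrN. Qed.

Lemma normB_le2 x y : `|x| = 1 -> `|y| = 1 -> `|x - y| <= 2.
Proof. by move=> hx hy; apply: (le_trans (ler_normB _ _)); rewrite hx hy. Qed.

Lemma normB_opp x : `|x| = 1 -> `|x - - x| = 2.
Proof. by move=> hx; rewrite opprK -mulr2n normrMn hx. Qed.

Lemma rad_unit_sphere x : `|x| = 1 -> Defs.rad S x = 2.
Proof.
move=> hx; apply/eqP; rewrite eq_le; apply/andP; split.
  apply: ge_sup; first by exists `|x - - x|, (- x) => //; exact: unit_sphereN.
  by move=> _ [y hy <-]; exact: normB_le2.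
apply: ub_le_sup.
  by exists 2 => _ [y hy <-]; exact: normB_le2.
by exists (- x); [exact: unit_sphereN | exact: normB_opp].
Qed.

Lemma Qset_unit_sphereE x d y : `|x| = 1 ->
  Qset S x d y <-> `|y| = 1 /\ 2 - d <= `|x - y|.
Proof. by move=> hx; rewrite /Qset rad_unit_sphere. Qed.

Lemma Qset_unit_sphere_opp x d : `|x| = 1 -> 0 <= d -> Qset S x d (- x).
Proof.
move=> hx d0; apply/Qset_unit_sphereE => //; rewrite normrN normB_opp //.
by split=> //; rewrite gerBl.
Qed.

Lemma setdist_le A B a b : A a -> B b -> setdist A B <= `|a - b|.
Proof.
move=> ha hb; apply: ge_inf; last by exists (a, b).
by exists 0 => _ [[? ?] _ <-].
Qed.

Lemma setdist_ge A B a b (L : R) : A a -> B b ->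
  (forall a' b', A a' -> B b' -> L <= `|a' - b'|) -> L <= setdist A B.
Proof.
move=> ha hb hL; apply: lb_le_inf; first by exists `|a - b|, (a, b).
by move=> _ [[a' b'] /= [ha' hb'] <-]; exact: hL.
Qed.

Lemma norm_detour x x' a b :
  `|x - x'| <= `|x + a| + `|a - b| + `|x' + b|.
Proof.
have -> : x - x' = (x + a) - (a - b) - (x' + b).
  by rewrite opprB addrA addrAC addrK opprD addrACA subrr addr0.
by apply: (le_trans (ler_normB _ _)); rewrite lerD2r ler_normB.
Qed.

Lemma setdist_near_opp x x' A B (e : R) : A (- x) -> B (- x') ->
  (forall a, A a -> `|x + a| <= e) -> (forall b, B b -> `|x' + b| <= e) ->
  `| setdist A B - `|x - x'| | <= 2 * e.
Proof.
move=> hA hB nearA nearB.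
have up : setdist A B <= `|x - x'|.
  by apply: le_trans (setdist_le hA hB) _; rewrite -opprD normrN.
have lo : `|x - x'| - 2 * e <= setdist A B.
  apply: (setdist_ge hA hB) => a b ha hb.
  have := norm_detour x x' a b; have := nearA a ha; have := nearB b hb; lra.
rewrite ler0_norm ?subr_le0 //; lra.
Qed.

End NormedSpace.

Section UniformRotundity.
Variables (R : realType) (X : normedModType R).
Hypothesis URX : UR X.

Lemma UR_cvg_addr0 (xn yn : nat -> X) :
  (forall n, `|xn n| = 1) -> (forall n, `|yn n| = 1) ->
  (fun n => `|xn n - yn n|) @ \oo --> (2 : R) ->
  (fun n => `|xn n + yn n|) @ \oo --> (0 : R).
Proof.
move=> hx hy h2.
have hNy n : `|- yn n| = 1 by rewrite normrN.
suff : (fun n => `|xn n - - yn n|) @ \oo --> (0 : R).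
  by under eq_fun do rewrite opprK.
apply: URX hx hNy _.
under eq_fun do rewrite normrZ ger0_norm ?invr_ge0 //.
have lim : (fun n => 2^-1 * `|xn n - yn n|) @ \oo --> (2^-1 * 2 : R).
  by apply: cvgM => //; exact: cvg_cst.
by rewrite mulVf in lim.
Qed.

Lemma UR_near_antipodal (e : R) : 0 < e -> exists N : nat, forall x y : X,
  `|x| = 1 -> `|y| = 1 -> 2 - N.+1%:R^-1 <= `|x - y| -> `|x + y| < e.
Proof.
move=> e0; apply: contrapT => /forallNP noN.
have witness N : exists p : X * X, [/\ `|p.1| = 1, `|p.2| = 1,
    2 - N.+1%:R^-1 <= `|p.1 - p.2| & e <= `|p.1 + p.2|].
  have /existsNP [x /existsNP [y /not_implyP [hx /not_implyP [hy]]]] := noN N.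
  by move=> /not_implyP [hxy /negP]; rewrite -leNgt => he; exists (x, y).
have [p hp] := choice witness.
have hp1 n : `|(p n).1| = 1 by case: (hp n).
have hp2 n : `|(p n).2| = 1 by case: (hp n).
have diam : (fun n => `|(p n).1 - (p n).2|) @ \oo --> (2 : R).
  apply: (@squeeze_cvgr _ _ _ _ (fun n => 2 - harmonic n) (fun=> 2)).
  - by near=> n; case: (hp n) => _ _ lo _; rewrite lo normB_le2.
  - by rewrite -[X in _ --> X]subr0; apply: cvgB; [exact: cvg_cst | exact: cvg_harmonic].
  - exact: cvg_cst.
have [N _ small] := cvgr_lt 0 (UR_cvg_addr0 hp1 hp2 diam) e e0.
by case: (hp N) => _ _ _; rewrite leNgt small /=.
Unshelve. all: by end_near.
Qed.

Lemma UR_Qset_near_opp (e : R) : 0 < e -> exists N : nat, forall n : nat,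
  (N <= n)%N -> forall x y : X, `|x| = 1 ->
  Qset (@unit_sphere R X) x n%:R^-1 y -> `|x + y| < e.
Proof.
move=> e0; have [N antipodal] := UR_near_antipodal e0.
exists N.+1 => n hn x y hx /(Qset_unit_sphereE _ _ hx) [hy far].
apply: antipodal => //; apply: le_trans far.
have n0 : (0 < n)%N by apply: leq_trans hn.
by rewrite lerD2l lerN2 lef_pV2 ?posrE ?ltr0n // ler_nat.
Qed.

Lemma UR_Prop2 : Prop2 X.
Proof.
move=> eps eps0; have [|N near_opp] := UR_Qset_near_opp (e := eps / 4).
  by rewrite divr_gt0.
exists N => n hn x x' hx hx'.
have d0 : 0 <= n%:R^-1 :> R by rewrite invr_ge0.
apply: le_lt_trans (setdist_near_opp (e := eps / 4) _ _ _ _) _.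
- exact: Qset_unit_sphere_opp.
- exact: Qset_unit_sphere_opp.
- by move=> a /(near_opp _ hn _ _ hx)/ltW.
- by move=> b /(near_opp _ hn _ _ hx')/ltW.
- lra.
Qed.

End UniformRotundity.

Lemma Prop2_Prop3 (R : realType) (X : normedModType R) : Prop2 X -> Prop3 X.
Proof.
move=> P2 eps eps0; have [N close] := P2 eps eps0.
exists N => n hn x hx.
by have := close n hn x (- x) hx (unit_sphereN hx); rewrite normB_opp.
Qed.

Theorem theorem3p12 (R : realType) (X : completeNormedModType R) :
  (UR X -> Prop2 X) /\ (Prop2 X -> Prop3 X).
Proof. by split; [exact: UR_Prop2 | exact: Prop2_Prop3]. Qed.
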